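(* Let $P$ be a set of $n$ points in $\mathbb{R}^d$ and let $k$ be an integer with $2\le k\le n$. Then there exist a point $q\in\mathbb{R}^d$ and a partition of $P$ into $k$ sets $P_1,\dots,P_k$ such that \[ d(q,\operatorname{conv}P_i)\le (2+\sqrt2)\sqrt{\frac kn}\,\operatorname{diam}P\qquad\text{for every } i\in[k]. \]
   Context: $d(q,S)$ is the Euclidean distance from a point $q$ to a set $S$; $\operatorname{diam}P$ is the Euclidean diameter; $[k]=\{1,\dots,k\}$. *)

From HB Require Import structures.
From mathcomp Require Import all_boot all_order all_algebra.
From mathcomp Require Import boolp classical_sets reals.
Set Implicit Arguments. Unset Strict Implicit. Unset Printing Implicit Defensive.
Import Order.TTheory GRing.Theory Num.Theory.
Local Open Scope ring_scope.
Local Open Scope classical_set_scope.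

Definition enorm (R : realType) (d : nat) (x : 'rV[R]_d) : R :=
  Num.sqrt (\sum_(i < d) x 0 i ^+ 2).

Definition conv (R : realType) (d : nat) (S : set 'rV[R]_d) : set 'rV[R]_d :=
  [set x | exists (m : nat) (w : 'I_m -> R) (y : 'I_m -> 'rV[R]_d),
      (forall i, 0 <= w i) /\ \sum_(i < m) w i = 1 /\
      (forall i, S (y i)) /\ x = \sum_(i < m) w i *: y i].

Definition dist_set (R : realType) (d : nat) (q : 'rV[R]_d) (A : set 'rV[R]_d) : R :=
  inf [set enorm (q - c) | c in A].

Definition diam (R : realType) (d n : nat) (p : 'I_n -> 'rV[R]_d) : R :=
  \big[Num.max/0]_(i < n) \big[Num.max/0]_(j < n) enorm (p i - p j).

Definition part (R : realType) (d n k : nat) (p : 'I_n -> 'rV[R]_d)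
  (f : 'I_n -> 'I_k) (i : 'I_k) : set 'rV[R]_d :=
  [set p j | j in [set j | f j = i]].

From HB Require Import structures.
From mathcomp Require Import all_boot all_order all_algebra.
From mathcomp Require Import boolp classical_sets reals.
From mathcomp Require Import ring lra zify.
Import Order.TTheory GRing.Theory Num.Theory.
Local Open Scope ring_scope.

Set Implicit Arguments.
Unset Strict Implicit.
Unset Printing Implicit Defensive.

(** Write D = diam P and let K be the power of two with k < K <= 2k.  Given
    2m points, pair them up and put the two points of each pair into opposite
    halves, choosing the orientation so that the inner product of the running
    difference of the two half-sums with the new difference is nonpositive;
    then the squared difference grows by at most D^2 per pair, so the two
    half-sums differ by at most sqrt(m) D and the centroid of each half is
    within D / (2 sqrt m) of the centroid of all 2m points.  Halving K r points
    (r = n / K) recursively down to K groups of r points, these errors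
    telescope to at most ((2 + sqrt 2) / 2) D / sqrt r, and n <= 4 k r turns
    this into the claimed bound.  The point q is the centroid of the K r
    points and P_i contains the i-th group, whose centroid lies in conv P_i.
    When K > n, singletons and q in P do the job. *)

Section Euclidean.
Variables (R : realType) (d : nat).
Implicit Types (u v w : 'rV[R]_d).

Definition sqnorm u := \sum_(i < d) u 0 i ^+ 2.
Definition dotv u v := \sum_(i < d) u 0 i * v 0 i.

Lemma sqnorm_ge0 u : 0 <= sqnorm u.
Proof. by apply: sumr_ge0 => i _; exact: sqr_ge0. Qed.

Lemma sqnorm_eq0 u : sqnorm u = 0 -> u = 0.
Proof.
move/eqP; rewrite psumr_eq0 => [/allP u0|i _]; last exact: sqr_ge0.
apply/rowP => i; apply/eqP; rewrite mxE -sqrf_eq0.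
exact: u0 (mem_index_enum i).
Qed.

Lemma sqnormD u v : sqnorm (u + v) = sqnorm u + 2 * dotv u v + sqnorm v.
Proof.
rewrite /sqnorm /dotv mulr_sumr -!big_split /=; apply: eq_bigr => i _.
by rewrite mxE; ring.
Qed.

Lemma sqnormN u : sqnorm (- u) = sqnorm u.
Proof. by apply: eq_bigr => i _; rewrite mxE sqrrN. Qed.

Lemma sqnormZ a u : sqnorm (a *: u) = a ^+ 2 * sqnorm u.
Proof. by rewrite /sqnorm mulr_sumr; apply: eq_bigr => i _; rewrite mxE; ring. Qed.

Lemma dotvC u v : dotv u v = dotv v u.
Proof. by apply: eq_bigr => i _; rewrite mulrC. Qed.

Lemma dotvNr u v : dotv u (- v) = - dotv u v.
Proof. by rewrite /dotv -sumrN; apply: eq_bigr => i _; rewrite mxE mulrN. Qed.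

Lemma dotvZl a u v : dotv (a *: u) v = a * dotv u v.
Proof. by rewrite /dotv mulr_sumr; apply: eq_bigr => i _; rewrite mxE mulrA. Qed.

Lemma dot0v v : dotv 0 v = 0.
Proof. by rewrite /dotv big1 // => i _; rewrite mxE mul0r. Qed.

Lemma enorm_ge0 u : 0 <= enorm u.
Proof. exact: sqrtr_ge0. Qed.

Lemma sqr_enorm u : enorm u ^+ 2 = sqnorm u.
Proof. by rewrite sqr_sqrtr // sqnorm_ge0. Qed.

Lemma enorm0 : enorm (0 : 'rV[R]_d) = 0.
Proof. by rewrite /enorm big1 ?sqrtr0 // => i _; rewrite mxE expr0n. Qed.

Lemma enormZ a u : enorm (a *: u) = `|a| * enorm u.
Proof. by rewrite /enorm -/(sqnorm _) sqnormZ sqrtrM ?sqr_ge0 // sqrtr_sqr. Qed.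

Lemma enorm_distC u v : enorm (u - v) = enorm (v - u).
Proof. by rewrite -opprB /enorm -/(sqnorm _) sqnormN. Qed.

Lemma dotv_le_enorm u v : dotv u v <= enorm u * enorm v.
Proof.
set a := enorm u; set b := enorm v.
have [a0 | a_neq0] := eqVneq a 0.
  have /sqnorm_eq0 -> : sqnorm u = 0 by rewrite -sqr_enorm -/a a0 expr0n.
  by rewrite dot0v a0 mul0r.
have [b0 | b_neq0] := eqVneq b 0.
  have /sqnorm_eq0 -> : sqnorm v = 0 by rewrite -sqr_enorm -/b b0 expr0n.
  by rewrite dotvC dot0v b0 mulr0.
have ab_gt0 : 0 < a * b by rewrite mulr_gt0 // lt0r ?a_neq0 ?b_neq0 enorm_ge0.
(* expanding |b u - a v|^2 >= 0 gives 2 a b (a b - <u, v>) >= 0 *)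
have := sqnorm_ge0 (b *: u - a *: v).
rewrite sqnormD sqnormN sqnormZ sqnormZ dotvNr dotvZl dotvC dotvZl dotvC.
rewrite -!sqr_enorm -/a -/b => expand_ge0.
have : 0 <= (a * b) * (a * b - dotv u v) by nra.
by rewrite pmulr_rge0 // subr_ge0.
Qed.

Lemma ler_enormD u v : enorm (u + v) <= enorm u + enorm v.
Proof.
rewrite -(ler_pXn2r (n := 2)) ?nnegrE ?addr_ge0 ?enorm_ge0 //.
by rewrite sqr_enorm sqnormD -!sqr_enorm; have := dotv_le_enorm u v; lra.
Qed.

Lemma sqnorm_addsub_le w v :
  sqnorm (w + v) <= sqnorm w + sqnorm v \/ sqnorm (w - v) <= sqnorm w + sqnorm v.
Proof.
rewrite !sqnormD sqnormN dotvNr.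
by case: (lerP (dotv w v) 0) => wv; [left | right]; lra.
Qed.

End Euclidean.

Section Centroids.
Variables (R : realType) (d : nat) (T : eqType) (p : T -> 'rV[R]_d).

Definition pts_sum (s : seq T) := \sum_(j <- s) p j.
Definition centroid (s : seq T) := (size s)%:R^-1 *: pts_sum s.

Lemma centroid_halfB s a b m : (0 < m)%N ->
  perm_eq s (a ++ b) -> size a = m -> size b = m ->
  centroid a - centroid s = (2 * m%:R)^-1 *: (pts_sum a - pts_sum b).
Proof.
move=> m_gt0 eq_s sa sb; have m_neq0 : m%:R != 0 :> R by rewrite pnatr_eq0 -lt0n.
rewrite /centroid /pts_sum (perm_size eq_s) (perm_big _ eq_s) big_cat /= size_cat sa sb.
by apply/rowP => i; rewrite !mxE natrD; field; rewrite m_neq0 -mulr2n mulrn_eq0.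
Qed.

Variable D : R.
Hypotheses (D_ge0 : 0 <= D) (pts_dist_le : forall x y, enorm (p x - p y) <= D).

Lemma balanced_halving m s : size s = (m + m)%N ->
  exists a b, [/\ perm_eq s (a ++ b), size a = m, size b = m &
    sqnorm (pts_sum a - pts_sum b) <= m%:R * D ^+ 2].
Proof.
elim: m s => [|m IH] [|x [|y s]] //= size_s; try lia.
  exists [::], [::]; split => //; rewrite mul0r /pts_sum big_nil subr0.
  by rewrite /sqnorm big1 // => i _; rewrite mxE expr0n.
have /IH [a [b [eq_s sa sb sq_ab]]] : size s = (m + m)%N by lia.
have sq_xy : sqnorm (p x - p y) <= D ^+ 2.
  by rewrite -sqr_enorm ler_sqr ?nnegrE ?enorm_ge0.
have eq_xys (u v : T) : perm_eq [:: u; v] [:: x; y] ->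
    perm_eq [:: x, y & s] ((u :: a) ++ v :: b).
  move=> /permP uv; apply/permP => P; move/permP: eq_s => /(_ P).
  by have := uv P; rewrite /= !count_cat /=; lia.
have sumB (u v : T) :
    pts_sum (u :: a) - pts_sum (v :: b) = (pts_sum a - pts_sum b) + (p u - p v).
  by rewrite /pts_sum !big_cons opprD addrACA addrC.
rewrite -natr1 mulrDl mul1r.
case: (sqnorm_addsub_le (pts_sum a - pts_sum b) (p x - p y)) => [le_xy | le_yx].
- exists (x :: a), (y :: b); split; rewrite ?eq_xys /= ?sa ?sb //.
  by rewrite sumB; lra.
- exists (y :: a), (x :: b); split; rewrite ?eq_xys /= ?sa ?sb //.
    by rewrite (perm_catC [:: y]).
  by rewrite sumB -[p y - p x]opprB; lra.
Qed.

Lemma centroid_half_dist s a b m : (0 < m)%N ->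
  perm_eq s (a ++ b) -> size a = m -> size b = m ->
  sqnorm (pts_sum a - pts_sum b) <= m%:R * D ^+ 2 ->
  enorm (centroid a - centroid s) <= D / (2 * Num.sqrt m%:R).
Proof.
move=> m_gt0 eq_s sa sb sq_ab; rewrite (centroid_halfB m_gt0 eq_s sa sb) enormZ.
have enorm_ab : enorm (pts_sum a - pts_sum b) <= Num.sqrt m%:R * D.
  by rewrite -(ger0_norm D_ge0) -sqrtr_sqr -sqrtrM ?ler0n // ler_sqrt ?mulr_ge0 ?sqr_ge0.
set u := Num.sqrt (m%:R : R) in enorm_ab *.
have u_gt0 : 0 < u by rewrite sqrtr_gt0 ltr0n.
have -> : m%:R = u ^+ 2 :> R by rewrite sqr_sqrtr ?ler0n.
have coef_ge0 : 0 <= (2 * u ^+ 2)^-1 by rewrite invr_ge0 mulr_ge0 // sqr_ge0.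
rewrite ger0_norm //; apply: le_trans (ler_wpM2l coef_ge0 enorm_ab) _.
by rewrite le_eqVlt; apply/orP; left; apply/eqP; field; rewrite gt_eqF.
Qed.

Definition alpha : R := (2 + Num.sqrt 2) / 2.

(* This identity is where alpha comes from: it absorbs the error D / (2 x) of one
   halving step into the bound as the group size doubles. *)
Lemma alpha_telescope (x : R) : 0 < x ->
  alpha * (x^-1 - (Num.sqrt 2 * x)^-1) = (2 * x)^-1.
Proof.
move=> x_gt0; rewrite /alpha.
have : Num.sqrt 2 ^+ 2 = 2 :> R by rewrite sqr_sqrtr // ler0n.
have : 0 < Num.sqrt 2 :> R by rewrite sqrtr_gt0 ltr0n.
move: (Num.sqrt 2) => y y_gt0 y2.
have -> : (2 + y) / 2 * (x^-1 - (y * x)^-1) = (y ^+ 2 + y - 2) / (2 * y * x).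
  by field; rewrite !gt_eqF.
by rewrite y2 addrAC subrr add0r; field; rewrite !gt_eqF.
Qed.

Lemma dyadic_error_step (w x e1 e2 : R) : 0 < x ->
  e1 <= alpha * D * (w - x^-1) -> e2 <= D / (2 * x) ->
  e1 + e2 <= alpha * D * (w - (Num.sqrt 2 * x)^-1).
Proof.
move=> x_gt0 le_e1 le_e2.
have -> : alpha * D * (w - (Num.sqrt 2 * x)^-1) =
    alpha * D * (w - x^-1) + D * (alpha * (x^-1 - (Num.sqrt 2 * x)^-1)) by ring.
by rewrite alpha_telescope //; lra.
Qed.

Lemma dyadic_groups t r s : (0 < r)%N -> size s = (2 ^ t * r)%N ->
  exists ss : seq (seq T), [/\ size ss = (2 ^ t)%N, perm_eq s (flatten ss) &
    forall c, c \in ss -> size c = r /\ enorm (centroid c - centroid s) <=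
      alpha * D * ((Num.sqrt r%:R)^-1 - (Num.sqrt (size s)%:R)^-1)].
Proof.
move=> r_gt0; elim: t s => [|t IH] s size_s.
  exists [:: s]; split; rewrite /= ?cats0 // => c; rewrite inE => /eqP ->.
  by rewrite size_s expn0 mul1n subrr subrr mulr0 enorm0.
set m := (2 ^ t * r)%N.
have m_gt0 : (0 < m)%N by rewrite muln_gt0 expn_gt0.
have size_s2 : size s = (m + m)%N by rewrite size_s expnS; lia.
have [a [b [eq_s sa sb sq_ab]]] := balanced_halving size_s2.
have [ssa [size_ssa eq_a near_a]] := IH a sa.
have [ssb [size_ssb eq_b near_b]] := IH b sb.
have sqrt_s : Num.sqrt (size s)%:R = Num.sqrt 2 * Num.sqrt (m%:R : R).
  by rewrite size_s2 -sqrtrM ?ler0n // natrD -mulr2n mulr_natl.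
have refine h ssh : size h = m ->
    enorm (centroid h - centroid s) <= D / (2 * Num.sqrt m%:R) ->
    (forall c, c \in ssh -> size c = r /\ enorm (centroid c - centroid h) <=
      alpha * D * ((Num.sqrt r%:R)^-1 - (Num.sqrt (size h)%:R)^-1)) ->
    forall c, c \in ssh -> size c = r /\ enorm (centroid c - centroid s) <=
      alpha * D * ((Num.sqrt r%:R)^-1 - (Num.sqrt (size s)%:R)^-1).
  move=> sh near_h near_ssh c /near_ssh [size_c near_c]; split => //.
  rewrite -(subrKA (centroid h)); apply: le_trans (ler_enormD _ _) _.
  rewrite sqrt_s; apply: dyadic_error_step; rewrite ?sqrtr_gt0 ?ltr0n // -sh //.
exists (ssa ++ ssb); split.
- by rewrite size_cat size_ssa size_ssb expnS; lia.
- by rewrite flatten_cat; apply: perm_trans eq_s _; exact: perm_cat.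
- move=> c; rewrite mem_cat => /orP [c_a | c_b].
    exact: refine (centroid_half_dist m_gt0 eq_s sa sb sq_ab) near_a _ c_a.
  apply: refine (centroid_half_dist m_gt0 _ sb sa _) near_b _ c_b => //.
    by rewrite perm_sym perm_catC perm_sym.
  by rewrite -opprB sqnormN.
Qed.

End Centroids.

Lemma nth_flatten_uniq_inj (T : eqType) (ss : seq (seq T)) i j x :
  uniq (flatten ss) -> x \in nth [::] ss i -> x \in nth [::] ss j -> i = j.
Proof.
move=> uss; wlog lt_ij : i j / (i < j)%N => [sym xi xj|].
  by case: (ltngtP i j) => [/sym | /sym | //]; [apply | move=> /(_ xj xi)].
move=> xi xj; have [j_ss | ss_j] := ltnP j (size ss); last by rewrite nth_default in xj.
move: uss; rewrite -(cat_take_drop j ss) flatten_cat cat_uniq => /and3P [_ /hasPn disj _].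
have x_drop : x \in flatten (drop j ss) by rewrite (drop_nth [::] j_ss) /= mem_cat xj.
have x_take : x \in flatten (take j ss).
  apply/flattenP; exists (nth [::] (take j ss) i); last by rewrite nth_take.
  by rewrite mem_nth // size_take j_ss.
by have := disj x x_drop; rewrite x_take.
Qed.

Lemma dist_set_le (R : realType) d (q x : 'rV[R]_d) (A : set 'rV[R]_d) :
  A x -> dist_set q A <= enorm (q - x).
Proof.
move=> Ax; apply: ge_inf; last by exists x.
by exists 0 => _ [y _ <-]; exact: enorm_ge0.
Qed.

Lemma centroid_in_conv (R : realType) d (T : eqType) (p : T -> 'rV[R]_d) (P : set T) c :
  c != [::] -> (forall j, j \in c -> P j) -> conv [set p j | j in P] (centroid p c).
Proof.
case: c => [|j0 c'] // _; set c := j0 :: c' => cP.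
have m_neq0 : (size c)%:R != 0 :> R by rewrite pnatr_eq0.
exists (size c), (fun _ => (size c)%:R^-1), (fun o : 'I_(size c) => p (nth j0 c o)).
split; first by move=> _; rewrite invr_ge0 ler0n.
split; first by rewrite sumr_const card_ord -[_ *+ size c]mulr_natr mulVf.
split; first by move=> o; exists (nth j0 c o) => //; apply: cP; exact: mem_nth.
by rewrite /centroid /pts_sum -scaler_sumr (big_nth j0) big_mkord.
Qed.

Lemma partition_near_centroids (R : realType) d n k (p : 'I_n -> 'rV[R]_d)
    (q : 'rV[R]_d) (B : R) (ss : seq (seq 'I_n)) :
  (0 < k)%N -> (k <= size ss)%N -> uniq (flatten ss) ->
  (forall c, c \in ss -> c != [::] /\ enorm (q - centroid p c) <= B) ->
  exists f : 'I_n -> 'I_k, (forall i, exists j, f j = i) /\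
    forall i, dist_set q (conv (part p f i)) <= B.
Proof.
move=> k_gt0 k_le uss near.
pose L (i : 'I_k) := nth [::] ss i.
have /all_and2 [L_neq0 L_near] :
    forall i, L i != [::] /\ enorm (q - centroid p (L i)) <= B.
  by move=> i; apply/near/mem_nth/(leq_trans (ltn_ord i)).
pose f j := if [pick i | j \in L i] is Some i then i else Ordinal k_gt0.
have fL i j : j \in L i -> f j = i.
  rewrite /f; case: pickP => [i' j_i' j_i | /(_ i) -> //].
  exact/val_inj/(nth_flatten_uniq_inj uss j_i' j_i).
exists f; split.
  move=> i; case: (L i) (L_neq0 i) (fL i) => [|j c] // _ fLi.
  by exists j; apply: fLi; exact: mem_head.
move=> i; apply: le_trans (L_near i).
by apply/dist_set_le/centroid_in_conv => // j /fL.
Qed.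

Lemma inv_sqrt_le_sqrt_ratio (R : realType) (n r k : nat) :
  (0 < n)%N -> (0 < r)%N -> (n <= 4 * r * k)%N ->
  (2 * Num.sqrt (r%:R : R))^-1 <= Num.sqrt (k%:R / n%:R).
Proof.
move=> n_gt0 r_gt0 n_le.
have -> : 2 * Num.sqrt (r%:R : R) = Num.sqrt (4 * r%:R).
  rewrite sqrtrM ?ler0n // (_ : 4 = 2 ^+ 2) ?sqrtr_sqr ?ger0_norm //; ring.
rewrite -sqrtrV ?mulr_ge0 ?ler0n // ler_sqrt ?divr_ge0 ?ler0n //.
rewrite ler_pdivlMr ?ltr0n // mulrC ler_pdivrMr ?mulr_gt0 ?ltr0n //.
by rewrite -!natrM ler_nat; lia.
Qed.

Lemma exists_centered_groups (R : realType) d n k (p : 'I_n -> 'rV[R]_d) (D : R) :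
  0 <= D -> (forall x y, enorm (p x - p y) <= D) -> (0 < k)%N -> (k <= n)%N ->
  exists q (ss : seq (seq 'I_n)) r,
    [/\ (0 < r)%N, (n <= 4 * r * k)%N, uniq (flatten ss), (k <= size ss)%N &
    forall c, c \in ss ->
      size c = r /\ enorm (q - centroid p c) <= alpha R * D / Num.sqrt r%:R].
Proof.
move=> D_ge0 pD k_gt0 k_le_n; have n_gt0 : (0 < n)%N by exact: leq_trans k_le_n.
pose K := (2 ^ (trunc_log 2 k).+1)%N.
have [k_le_K K_le_2k] : (k <= K)%N /\ (K <= 2 * k)%N.
  have /andP[lo hi] := trunc_log_bounds (isT : (1 < 2)%N) k_gt0.
  by split; [exact: ltnW hi | rewrite /K expnS leq_mul2l].
have alpha_ge0 : 0 <= alpha R by rewrite divr_ge0 ?addr_ge0 ?sqrtr_ge0.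
case: (leqP K n) => [K_le_n | n_lt_K].
- pose r := (n %/ K)%N.
  have K_gt0 : (0 < K)%N by rewrite expn_gt0.
  have r_gt0 : (0 < r)%N by rewrite divn_gt0.
  pose s := take (K * r) (enum 'I_n).
  have size_s : size s = (2 ^ (trunc_log 2 k).+1 * r)%N.
    by rewrite size_takel // size_enum_ord mulnC leq_divM.
  have [ss [size_ss eq_s near]] := dyadic_groups D_ge0 pD r_gt0 size_s.
  exists (centroid p s), ss, r; split => //.
  + have := ltn_ceil n K_gt0; rewrite -/r; nia.
  + by rewrite -(perm_uniq eq_s) take_uniq ?enum_uniq.
  + by rewrite size_ss.
  + move=> c /near [-> near_c]; split => //; rewrite enorm_distC.
    apply: le_trans near_c (ler_wpM2l (mulr_ge0 alpha_ge0 D_ge0) _); rewrite gerBl.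
    by rewrite invr_ge0 sqrtr_ge0.
- pose j0 : 'I_n := Ordinal n_gt0.
  exists (p j0), [seq [:: j] | j <- enum 'I_n], 1%N; split => //.
  + lia.
  + by rewrite flatten_seq1 enum_uniq.
  + by rewrite size_map size_enum_ord.
  + move=> _ /mapP [j _ ->]; split => //.
    rewrite /centroid /pts_sum big_seq1 invr1 scale1r sqrtr1 divr1.
    apply: le_trans (pD j0 j) _; apply: ler_peMl => //.
    by rewrite /alpha ler_pdivlMr // mul1r lerDl sqrtr_ge0.
Qed.

Lemma enorm_le_diam (R : realType) d n (p : 'I_n -> 'rV[R]_d) i j :
  enorm (p i - p j) <= diam p.
Proof.
have le_bigmax m (F : 'I_m -> R) l : F l <= \big[Num.max/0]_(l' < m) F l'.
  by rewrite (bigD1 l) //= le_max lexx.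
exact: le_trans (le_bigmax _ (fun j => enorm (p i - p j)) j) (le_bigmax _ _ i).
Qed.

Theorem theorem1p3 (R : realType) (d n k : nat) (p : 'I_n -> 'rV[R]_d)
  (p_inj : injective p) (hk2 : (2 <= k)%N) (hkn : (k <= n)%N) :
  exists (q : 'rV[R]_d) (f : 'I_n -> 'I_k),
    (forall i : 'I_k, exists j : 'I_n, f j = i) /\
    (forall i : 'I_k,
       dist_set q (conv (part p f i)) <=
       (2 + Num.sqrt 2) * Num.sqrt (k%:R / n%:R) * diam p).
Proof.
have k_gt0 : (0 < k)%N by exact: leq_trans hk2.
have n_gt0 : (0 < n)%N by exact: leq_trans hkn.
have pD := enorm_le_diam p.
have D_ge0 : 0 <= diam p.
  by apply: le_trans (pD (Ordinal n_gt0) (Ordinal n_gt0)); exact: enorm_ge0.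
have [q [ss [r [r_gt0 n_le uss k_le near]]]] := exists_centered_groups D_ge0 pD k_gt0 hkn.
(* The argument never uses [p_inj]: it works verbatim for multisets of points. *)
have [|f [f_onto f_dist]] := partition_near_centroids (p := p) (q := q)
  (B := alpha R * diam p / Num.sqrt r%:R) k_gt0 k_le uss.
  by move=> c /near [size_c ->]; rewrite -size_eq0 size_c -lt0n r_gt0.
exists q, f; split => // i; apply: le_trans (f_dist i) _.
have -> : alpha R * diam p / Num.sqrt r%:R =
    (2 + Num.sqrt 2) * (2 * Num.sqrt r%:R)^-1 * diam p by rewrite /alpha invfM; ring.
apply: (ler_wpM2r D_ge0); apply: ler_wpM2l; first by rewrite addr_ge0 ?sqrtr_ge0.
exact: inv_sqrt_le_sqrt_ratio.
Qed.
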